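(* Suppose $\Gamma_1\triangleright W_1\simeq\Gamma_2\triangleright W_2$, where both configurations are well-formed. Then for every channel $c$, if $c$ is idle in $\Gamma_1$ then $c$ is idle in $\Gamma_2$.
   Context: CCCP syntax. Fix a set of channels (ranged over by $c,d$) and a set of values containing data variables $x,y$ and a special error value $\mathtt{err}$; closed values $v,w$ contain no variables, and each closed value $v$ has a transmission time $\delta_v\in\mathbb{N}$ with $\delta_v\ge 1$. Expressions $e$ are built from values; closed expressions evaluate to closed values via $[\![e]\!]$. Station code (processes) is given by $P,Q ::= c!\langle e\rangle.P \mid \lfloor ?c(x).P\rfloor Q \mid \sigma.P \mid \tau.P \mid P+Q \mid [b]P,Q \mid X \mid \mathbf{0} \mid \mathrm{fix}\,X.P$, where $b$ is either $e_1=e_2$ or $\mathrm{exp}(c)$, $[b]P,Q$ is a conditional (then-branch $P$, else-branch $Q$), $\lfloor ?c(x).P\rfloor Q$ is a receiver on $c$ with timeout branch $Q$ ($x$ bound in $P$), $\sigma.P$ is a one-unit delay and $\sigma^n.P$ denotes $n$ nested delays. System terms are $W ::= P \mid \lfloor ?c(x).P\rfloor \mid W_1|W_2 \mid \nu c{:}(n,v).W$, where $\lfloor ?c(x).P\rfloor$ is an active receiver ($x$ bound in $P$) and $\nu c{:}(n,v).W$ restricts $c$ with local channel state $(n,v)$. In $\mathrm{fix}\,X.P$ every occurrence of $X$ in $P$ is guarded, i.e. lies within a broadcast prefix, a receiver continuation, a timeout branch, a $\sigma$-prefix, or a branch of a conditional. Terms are identified up to $\alpha$-conversion. A channel environment is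 a map $\Gamma$ from channels to $\mathbb{N}\times$(closed values); write $\Gamma\vdash_t c:n$ and $\Gamma\vdash_v c:w$ when $\Gamma(c)=(n,w)$; $c$ is idle in $\Gamma$ if $\Gamma\vdash_t c:0$ and exposed otherwise; $\Gamma[c\mapsto(n,v)]$ is $\Gamma$ updated at $c$; $\Gamma\le\Gamma'$ iff for every $c$, $\Gamma\vdash_t c:n$ and $\Gamma'\vdash_t c:m$ imply $n\le m$. A configuration $\Gamma\triangleright W$ is a channel environment together with a closed system term (no free data or process variables). Intensional semantics. Actions $\lambda$ are $c!v$, $c?v$, $\sigma$, $\tau$. The environment update $\lambda(\Gamma)$ is: $\sigma(\Gamma)(c)=(\max(n-1,0),w)$ whenever $\Gamma(c)=(n,w)$; $c!v(\Gamma)$ agrees with $\Gamma$ except at $c$, where it is $(\delta_v,v)$ if $c$ is idle in $\Gamma$ and $(\max(\delta_v,n),\mathtt{err})$ if $\Gamma\vdash_t c:n>0$; $c?v(\Gamma)=c!v(\Gamma)$; $\tau(\Gamma)=\Gamma$. The predicate $\mathrm{rcv}(W,c)$ on terms is: true for $\lfloor ?d(x).P\rfloor Q$ iff $d=c$; $\mathrm{rcv}(P+Q,c)=\mathrm{rcv}(P,c)\vee\mathrm{rcv}(Q,c)$; $\mathrm{rcv}(\mathrm{fix}\,X.P,c)=\mathrm{rcv}(P,c)$; $\mathrm{rcv}(W_1|W_2,c)=\mathrm{rcv}(W_1,c)\vee\mathrm{rcv}(W_2,c)$; $\mathrm{rcv}(\nu d{:}(n,v).W,c)=\mathrm{rcv}(W,c)$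 (with $d\neq c$ by $\alpha$-conversion); false for all other forms (broadcasts, $\tau.P$, $\sigma.P$, conditionals, $X$, $\mathbf 0$, active receivers). Then $\mathrm{rcv}(\Gamma\triangleright W,c)$ holds iff $c$ is idle in $\Gamma$ and $\mathrm{rcv}(W,c)$. Transitions $\Gamma\triangleright W\xrightarrow{\lambda}W'$ are the least relation closed under: (Snd) $[\![e]\!]=v$ implies $\Gamma\triangleright c!\langle e\rangle.P\xrightarrow{c!v}\sigma^{\delta_v}.P$; (Rcv) $c$ idle in $\Gamma$ implies $\Gamma\triangleright\lfloor ?c(x).P\rfloor Q\xrightarrow{c?v}\lfloor ?c(x).P\rfloor$; (RcvIgn) $\neg\mathrm{rcv}(\Gamma\triangleright W,c)$ implies $\Gamma\triangleright W\xrightarrow{c?v}W$; (Sync) $\Gamma\triangleright W_1\xrightarrow{c!v}W_1'$ and $\Gamma\triangleright W_2\xrightarrow{c?v}W_2'$ imply $\Gamma\triangleright W_1|W_2\xrightarrow{c!v}W_1'|W_2'$, and symmetrically; (RcvPar) $\Gamma\triangleright W_i\xrightarrow{c?v}W_i'$ for $i=1,2$ imply $\Gamma\triangleright W_1|W_2\xrightarrow{c?v}W_1'|W_2'$; (TimeNil) $\Gamma\triangleright\mathbf 0\xrightarrow{\sigma}\mathbf 0$; (Sleep) $\Gamma\triangleright\sigma.P\xrightarrow{\sigma}P$; (ActRcv) $\Gamma\vdash_t c:n$, $n>1$ imply $\Gamma\triangleright\lfloor ?c(x).P\rfloor\xrightarrow{\sigma}\lfloor ?c(x).P\rfloor$;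 (EndRcv) $\Gamma\vdash_t c:1$, $\Gamma\vdash_v c:w$ imply $\Gamma\triangleright\lfloor ?c(x).P\rfloor\xrightarrow{\sigma}\{w/x\}P$; (Timeout) $c$ idle in $\Gamma$ implies $\Gamma\triangleright\lfloor ?c(x).P\rfloor Q\xrightarrow{\sigma}Q$; (RcvLate) $c$ exposed in $\Gamma$ implies $\Gamma\triangleright\lfloor ?c(x).P\rfloor Q\xrightarrow{\tau}\lfloor ?c(x).\{\mathtt{err}/x\}P\rfloor$; (Tau) $\Gamma\triangleright\tau.P\xrightarrow{\tau}P$; (Then)/(Else) $\Gamma\triangleright[b]P,Q\xrightarrow{\tau}\sigma.P$ if $[\![b]\!]_\Gamma$ is true and $\xrightarrow{\tau}\sigma.Q$ otherwise, where $[\![e_1=e_2]\!]_\Gamma$ is true iff $[\![e_1]\!]=[\![e_2]\!]$ and $[\![\mathrm{exp}(c)]\!]_\Gamma$ is true iff $c$ is exposed in $\Gamma$; (TimePar) $\Gamma\triangleright W_i\xrightarrow{\sigma}W_i'$ for $i=1,2$ imply $\Gamma\triangleright W_1|W_2\xrightarrow{\sigma}W_1'|W_2'$; (TauPar) $\Gamma\triangleright W_1\xrightarrow{\tau}W_1'$ implies $\Gamma\triangleright W_1|W_2\xrightarrow{\tau}W_1'|W_2$, and symmetrically; (Rec) $\Gamma\triangleright\{\mathrm{fix}\,X.P/X\}P\xrightarrow{\lambda}W$ implies $\Gamma\triangleright\mathrm{fix}\,X.P\xrightarrow{\lambda}W$; (Sum) for $\lambda\in\{\tau,c!v\}$, $\Gamma\triangleright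 P\xrightarrow{\lambda}W$ implies $\Gamma\triangleright P+Q\xrightarrow{\lambda}W$, and symmetrically; (SumTime) $\Gamma\triangleright P\xrightarrow{\sigma}P'$, $\Gamma\triangleright Q\xrightarrow{\sigma}Q'$ imply $\Gamma\triangleright P+Q\xrightarrow{\sigma}P'+Q'$; (SumRcv) $\Gamma\triangleright P\xrightarrow{c?v}W$ and $\mathrm{rcv}(\Gamma\triangleright P,c)$ imply $\Gamma\triangleright P+Q\xrightarrow{c?v}W$, and symmetrically; (ResI) $\Gamma[c\mapsto(n,v)]\triangleright W\xrightarrow{c!w}W'$ implies $\Gamma\triangleright\nu c{:}(n,v).W\xrightarrow{\tau}\nu c{:}(c!w(\Gamma[c\mapsto(n,v)]))(c).W'$; (ResV) $\Gamma[c\mapsto(n,v)]\triangleright W\xrightarrow{\lambda}W'$ with $c$ not occurring in $\lambda$ implies $\Gamma\triangleright\nu c{:}(n,v).W\xrightarrow{\lambda}\nu c{:}(\lambda(\Gamma[c\mapsto(n,v)]))(c).W'$. Reductions. $\Gamma\triangleright W\to\Gamma'\triangleright W'$ iff $\Gamma\triangleright W\xrightarrow{\lambda}W'$ for some $\lambda\in\{c!v,\sigma,\tau\}$ and $\Gamma'=\lambda(\Gamma)$; it is instantaneous ($\to_i$) if $\lambda\neq\sigma$ and timed ($\to_\sigma$) if $\lambda=\sigma$. Reduction barbed congruence. $\Gamma\triangleright W\downarrow_c$ iff $c$ is exposed in $\Gamma$; $\mathcal C\Downarrow_c$ iff $\mathcal C\to^*\mathcal C'$ for some $\mathcal C'$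 with $\mathcal C'\downarrow_c$. A relation $\mathcal R$ on configurations is barb preserving if $\mathcal C_1\mathcal R\mathcal C_2$ and $\mathcal C_1\Downarrow_c$ imply $\mathcal C_2\Downarrow_c$; reduction closed if $\mathcal C_1\mathcal R\mathcal C_2$ and $\mathcal C_1\to\mathcal C_1'$ imply $\mathcal C_2\to^*\mathcal C_2'$ for some $\mathcal C_2'$ with $\mathcal C_1'\mathcal R\mathcal C_2'$; contextual if $(\Gamma_1\triangleright W_1)\mathcal R(\Gamma_2\triangleright W_2)$ implies $(\Gamma_1\triangleright W_1|W)\mathcal R(\Gamma_2\triangleright W_2|W)$ for every closed system term $W$. Reduction barbed congruence $\simeq$ is the largest symmetric relation on configurations that is barb preserving, reduction closed and contextual. Well-formedness. The set of well-formed configurations is the least set such that: $\Gamma\triangleright P$ is well-formed for every closed process $P$; $\Gamma\triangleright\lfloor ?c(x).P\rfloor$ is well-formed whenever $c$ is exposed in $\Gamma$; $\Gamma\triangleright W_1|W_2$ is well-formed whenever $\Gamma\triangleright W_1$ and $\Gamma\triangleright W_2$ are; $\Gamma\triangleright\nu c{:}(n,v).W$ is well-formed whenever $\Gamma[c\mapsto(n,v)]\triangleright W$ is. *)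

From Stdlib Require Import List Arith PeanoNat Relations.Relation_Operators.
Import ListNotations.

Set Implicit Arguments.

(* Channels, data variables and process variables are names (natural numbers;
   an infinite supply is needed for alpha-conversion of restricted channels). *)
Definition chan := nat.
Definition dvar := nat.
Definition pvar := nat.

Record signature := Signature {
  val : Type;
  err : val;
  delta : val -> nat;                    (* transmission time delta_v *)
  fsym : Type;
  interp : fsym -> list val -> val
}.

Section CCCP.
Variable Sg : signature.
Local Notation V := (val Sg).

Inductive exp : Type :=
  | EVal (v : V)
  | EVar (x : dvar)
  | EApp (f : fsym Sg) (es : list exp).

Fixpoint eval (e : exp) : option V :=
  match e with
  | EVal v => Some v
  | EVar _ => None
  | EApp f es =>
      match (fix evs (l : list exp) : option (list V) :=
               match l with
               | [] => Some []
               | e1 :: l1 => match eval e1, evs l1 with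
                             | Some v, Some vs => Some (v :: vs)
                             | _, _ => None end
               end) es with
      | Some vs => Some (interp Sg f vs)
      | None => None
      end
  end.

Fixpoint subst_e (x : dvar) (w : V) (e : exp) : exp :=
  match e with
  | EVal v => EVal v
  | EVar y => if Nat.eqb y x then EVal w else EVar y
  | EApp f es => EApp f (map (subst_e x w) es)
  end.

Fixpoint closed_e (xs : list dvar) (e : exp) : Prop :=
  match e with
  | EVal _ => True
  | EVar y => In y xs
  | EApp _ es => (fix all (l : list exp) : Prop :=
                    match l with [] => True | e1 :: l1 => closed_e xs e1 /\ all l1 end) es
  end.

(* Boolean guards b : e1 = e2 or exp(c). *)
Inductive cond : Type :=
  | CEq (e1 e2 : exp)
  | CExp (c : chan).

Inductive proc : Type :=
  | PSnd (c : chan) (e : exp) (P : proc)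
  | PRcv (c : chan) (x : dvar) (P Q : proc)         (* |_?c(x).P_| Q *)
  | PSigma (P : proc)
  | PTau (P : proc)
  | PSum (P Q : proc)
  | PIf (b : cond) (P Q : proc)
  | PVar (X : pvar)
  | PNil
  | PFix (X : pvar) (P : proc).

Inductive sys : Type :=
  | SProc (P : proc)
  | SActRcv (c : chan) (x : dvar) (P : proc)
  | SPar (W1 W2 : sys)
  | SRes (c : chan) (n : nat) (v : V) (W : sys).    (* nu c:(n,v).W *)

Fixpoint sigma_n (n : nat) (P : proc) : proc :=
  match n with 0 => P | S m => PSigma (sigma_n m P) end.

Definition subst_c (x : dvar) (w : V) (b : cond) : cond :=
  match b with
  | CEq e1 e2 => CEq (subst_e x w e1) (subst_e x w e2)
  | CExp c => CExp c
  end.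

Fixpoint subst_p (x : dvar) (w : V) (P : proc) : proc :=
  match P with
  | PSnd c e P1 => PSnd c (subst_e x w e) (subst_p x w P1)
  | PRcv c y P1 Q1 =>
      if Nat.eqb y x then PRcv c y P1 (subst_p x w Q1)
      else PRcv c y (subst_p x w P1) (subst_p x w Q1)
  | PSigma P1 => PSigma (subst_p x w P1)
  | PTau P1 => PTau (subst_p x w P1)
  | PSum P1 Q1 => PSum (subst_p x w P1) (subst_p x w Q1)
  | PIf b P1 Q1 => PIf (subst_c x w b) (subst_p x w P1) (subst_p x w Q1)
  | PVar X => PVar X
  | PNil => PNil
  | PFix X P1 => PFix X (subst_p x w P1)
  end.

Fixpoint subst_X (X : pvar) (R : proc) (P : proc) : proc :=
  match P with
  | PSnd c e P1 => PSnd c e (subst_X X R P1)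
  | PRcv c y P1 Q1 => PRcv c y (subst_X X R P1) (subst_X X R Q1)
  | PSigma P1 => PSigma (subst_X X R P1)
  | PTau P1 => PTau (subst_X X R P1)
  | PSum P1 Q1 => PSum (subst_X X R P1) (subst_X X R Q1)
  | PIf b P1 Q1 => PIf b (subst_X X R P1) (subst_X X R Q1)
  | PVar Y => if Nat.eqb Y X then R else PVar Y
  | PNil => PNil
  | PFix Y P1 => if Nat.eqb Y X then PFix Y P1 else PFix Y (subst_X X R P1)
  end.

(* Channel transposition (used for alpha-conversion of restricted channels). *)
Definition swap_ch (a b c : chan) : chan :=
  if Nat.eqb c a then b else if Nat.eqb c b then a else c.

Definition swap_cond (a b : chan) (bb : cond) : cond :=
  match bb with CEq e1 e2 => CEq e1 e2 | CExp c => CExp (swap_ch a b c) end.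

Fixpoint swap_p (a b : chan) (P : proc) : proc :=
  match P with
  | PSnd c e P1 => PSnd (swap_ch a b c) e (swap_p a b P1)
  | PRcv c y P1 Q1 => PRcv (swap_ch a b c) y (swap_p a b P1) (swap_p a b Q1)
  | PSigma P1 => PSigma (swap_p a b P1)
  | PTau P1 => PTau (swap_p a b P1)
  | PSum P1 Q1 => PSum (swap_p a b P1) (swap_p a b Q1)
  | PIf bb P1 Q1 => PIf (swap_cond a b bb) (swap_p a b P1) (swap_p a b Q1)
  | PVar X => PVar X
  | PNil => PNil
  | PFix X P1 => PFix X (swap_p a b P1)
  end.

Fixpoint swap_s (a b : chan) (W : sys) : sys :=
  match W with
  | SProc P => SProc (swap_p a b P)
  | SActRcv c x P => SActRcv (swap_ch a b c) x (swap_p a b P)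
  | SPar W1 W2 => SPar (swap_s a b W1) (swap_s a b W2)
  | SRes c n v W1 => SRes (swap_ch a b c) n v (swap_s a b W1)
  end.

Definition ch_in_cond (d : chan) (b : cond) : Prop :=
  match b with CEq _ _ => False | CExp c => c = d end.

Fixpoint ch_in_p (d : chan) (P : proc) : Prop :=
  match P with
  | PSnd c _ P1 => c = d \/ ch_in_p d P1
  | PRcv c _ P1 Q1 => c = d \/ ch_in_p d P1 \/ ch_in_p d Q1
  | PSigma P1 | PTau P1 | PFix _ P1 => ch_in_p d P1
  | PSum P1 Q1 => ch_in_p d P1 \/ ch_in_p d Q1
  | PIf b P1 Q1 => ch_in_cond d b \/ ch_in_p d P1 \/ ch_in_p d Q1
  | PVar _ | PNil => False
  end.

Fixpoint free_ch (d : chan) (W : sys) : Prop :=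
  match W with
  | SProc P => ch_in_p d P
  | SActRcv c _ P => c = d \/ ch_in_p d P
  | SPar W1 W2 => free_ch d W1 \/ free_ch d W2
  | SRes c _ _ W1 => c <> d /\ free_ch d W1
  end.

Definition closed_cond (xs : list dvar) (b : cond) : Prop :=
  match b with CEq e1 e2 => closed_e xs e1 /\ closed_e xs e2 | CExp _ => True end.

Fixpoint closed_p (xs : list dvar) (Xs : list pvar) (P : proc) : Prop :=
  match P with
  | PSnd _ e P1 => closed_e xs e /\ closed_p xs Xs P1
  | PRcv _ x P1 Q1 => closed_p (x :: xs) Xs P1 /\ closed_p xs Xs Q1
  | PSigma P1 | PTau P1 => closed_p xs Xs P1
  | PSum P1 Q1 => closed_p xs Xs P1 /\ closed_p xs Xs Q1
  | PIf b P1 Q1 => closed_cond xs b /\ closed_p xs Xs P1 /\ closed_p xs Xs Q1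
  | PVar X => In X Xs
  | PNil => True
  | PFix X P1 => closed_p xs (X :: Xs) P1
  end.

Fixpoint unguarded (X : pvar) (P : proc) : Prop :=
  match P with
  | PSnd _ _ _ | PRcv _ _ _ _ | PSigma _ | PIf _ _ _ | PNil => False
  | PTau P1 => unguarded X P1
  | PSum P1 Q1 => unguarded X P1 \/ unguarded X Q1
  | PVar Y => Y = X
  | PFix Y P1 => Y <> X /\ unguarded X P1
  end.

Fixpoint guarded_rec (P : proc) : Prop :=
  match P with
  | PSnd _ _ P1 | PSigma P1 | PTau P1 => guarded_rec P1
  | PRcv _ _ P1 Q1 | PSum P1 Q1 | PIf _ P1 Q1 => guarded_rec P1 /\ guarded_rec Q1
  | PVar _ | PNil => True
  | PFix X P1 => ~ unguarded X P1 /\ guarded_rec P1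
  end.

Fixpoint closed_s (xs : list dvar) (W : sys) : Prop :=
  match W with
  | SProc P => closed_p xs [] P /\ guarded_rec P
  | SActRcv _ x P => closed_p (x :: xs) [] P /\ guarded_rec P
  | SPar W1 W2 => closed_s xs W1 /\ closed_s xs W2
  | SRes _ _ _ W1 => closed_s xs W1
  end.

Definition closed_sys (W : sys) : Prop := closed_s [] W.

Definition env := chan -> nat * V.

Definition upd (G : env) (c : chan) (p : nat * V) : env :=
  fun d => if Nat.eqb d c then p else G d.

Definition idle (G : env) (c : chan) : Prop := fst (G c) = 0.
Definition exposed (G : env) (c : chan) : Prop := fst (G c) <> 0.

Inductive label : Type :=
  | LSnd (c : chan) (v : V)
  | LRcv (c : chan) (v : V)
  | LSig
  | LTau.

Definition ch_in_label (c : chan) (l : label) : Prop :=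
  match l with LSnd d _ | LRcv d _ => d = c | _ => False end.

Definition tx_upd (G : env) (c : chan) (v : V) : env :=
  upd G c (if Nat.eqb (fst (G c)) 0 then (delta Sg v, v)
           else (Nat.max (delta Sg v) (fst (G c)), err Sg)).

Definition act_env (l : label) (G : env) : env :=
  match l with
  | LSig => fun c => (fst (G c) - 1, snd (G c))
  | LSnd c v | LRcv c v => tx_upd G c v
  | LTau => G
  end.

Fixpoint rcv_p (P : proc) (c : chan) : Prop :=
  match P with
  | PRcv d _ _ _ => d = c
  | PSum P1 Q1 => rcv_p P1 c \/ rcv_p Q1 c
  | PFix _ P1 => rcv_p P1 c
  | _ => False
  end.

(* For nu d.W, alpha-conversion makes d <> c; if d = c the bound channel is
   renamed away and no receiver on (the free channel) c remains. *)
Fixpoint rcv_s (W : sys) (c : chan) : Prop :=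
  match W with
  | SProc P => rcv_p P c
  | SActRcv _ _ _ => False
  | SPar W1 W2 => rcv_s W1 c \/ rcv_s W2 c
  | SRes d _ _ W1 => d <> c /\ rcv_s W1 c
  end.

Definition rcv_conf (G : env) (W : sys) (c : chan) : Prop := idle G c /\ rcv_s W c.

Definition beval (G : env) (b : cond) : Prop :=
  match b with
  | CEq e1 e2 => eval e1 = eval e2
  | CExp c => exposed G c
  end.

Inductive trans : env -> sys -> label -> sys -> Prop :=
  | tSnd G c e P v :
      eval e = Some v ->
      trans G (SProc (PSnd c e P)) (LSnd c v) (SProc (sigma_n (delta Sg v) P))
  | tRcv G c x P Q v :
      idle G c -> trans G (SProc (PRcv c x P Q)) (LRcv c v) (SActRcv c x P)
  | tRcvIgn G W c v :
      ~ rcv_conf G W c -> trans G W (LRcv c v) W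
  | tSyncL G W1 W2 W1' W2' c v :
      trans G W1 (LSnd c v) W1' -> trans G W2 (LRcv c v) W2' ->
      trans G (SPar W1 W2) (LSnd c v) (SPar W1' W2')
  | tSyncR G W1 W2 W1' W2' c v :
      trans G W1 (LRcv c v) W1' -> trans G W2 (LSnd c v) W2' ->
      trans G (SPar W1 W2) (LSnd c v) (SPar W1' W2')
  | tRcvPar G W1 W2 W1' W2' c v :
      trans G W1 (LRcv c v) W1' -> trans G W2 (LRcv c v) W2' ->
      trans G (SPar W1 W2) (LRcv c v) (SPar W1' W2')
  | tTimeNil G : trans G (SProc PNil) LSig (SProc PNil)
  | tSleep G P : trans G (SProc (PSigma P)) LSig (SProc P)
  | tActRcv G c x P :
      1 < fst (G c) -> trans G (SActRcv c x P) LSig (SActRcv c x P)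
  | tEndRcv G c x P :
      fst (G c) = 1 -> trans G (SActRcv c x P) LSig (SProc (subst_p x (snd (G c)) P))
  | tTimeout G c x P Q :
      idle G c -> trans G (SProc (PRcv c x P Q)) LSig (SProc Q)
  | tRcvLate G c x P Q :
      exposed G c ->
      trans G (SProc (PRcv c x P Q)) LTau (SActRcv c x (subst_p x (err Sg) P))
  | tTau G P : trans G (SProc (PTau P)) LTau (SProc P)
  | tThen G b P Q : beval G b -> trans G (SProc (PIf b P Q)) LTau (SProc (PSigma P))
  | tElse G b P Q : ~ beval G b -> trans G (SProc (PIf b P Q)) LTau (SProc (PSigma Q))
  | tTimePar G W1 W2 W1' W2' :
      trans G W1 LSig W1' -> trans G W2 LSig W2' ->
      trans G (SPar W1 W2) LSig (SPar W1' W2')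
  | tTauParL G W1 W2 W1' :
      trans G W1 LTau W1' -> trans G (SPar W1 W2) LTau (SPar W1' W2)
  | tTauParR G W1 W2 W2' :
      trans G W2 LTau W2' -> trans G (SPar W1 W2) LTau (SPar W1 W2')
  | tRec G X P l W :
      trans G (SProc (subst_X X (PFix X P) P)) l W -> trans G (SProc (PFix X P)) l W
  | tSumL G P Q l W :
      (l = LTau \/ exists c v, l = LSnd c v) ->
      trans G (SProc P) l W -> trans G (SProc (PSum P Q)) l W
  | tSumR G P Q l W :
      (l = LTau \/ exists c v, l = LSnd c v) ->
      trans G (SProc Q) l W -> trans G (SProc (PSum P Q)) l W
  | tSumTime G P Q P' Q' :
      trans G (SProc P) LSig (SProc P') -> trans G (SProc Q) LSig (SProc Q') ->
      trans G (SProc (PSum P Q)) LSig (SProc (PSum P' Q'))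
  | tSumRcvL G P Q c v W :
      trans G (SProc P) (LRcv c v) W -> rcv_conf G (SProc P) c ->
      trans G (SProc (PSum P Q)) (LRcv c v) W
  | tSumRcvR G P Q c v W :
      trans G (SProc Q) (LRcv c v) W -> rcv_conf G (SProc Q) c ->
      trans G (SProc (PSum P Q)) (LRcv c v) W
  | tResI G c n v W W' w :
      trans (upd G c (n, v)) W (LSnd c w) W' ->
      trans G (SRes c n v W) LTau
        (SRes c (fst (act_env (LSnd c w) (upd G c (n, v)) c))
                (snd (act_env (LSnd c w) (upd G c (n, v)) c)) W')
  | tResV G c n v W W' l :
      ~ ch_in_label c l ->
      trans (upd G c (n, v)) W l W' ->
      trans G (SRes c n v W) l
        (SRes c (fst (act_env l (upd G c (n, v)) c))
                (snd (act_env l (upd G c (n, v)) c)) W')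
  | tResAlpha G c d n v W l W' :
      ~ free_ch d (SRes c n v W) ->
      trans G (SRes d n v (swap_s c d W)) l W' ->
      trans G (SRes c n v W) l W'.

Definition config : Type := (env * sys)%type.

Definition is_config (C : config) : Prop := closed_sys (snd C).

Definition red (C C' : config) : Prop :=
  exists l, (forall c v, l <> LRcv c v) /\
            trans (fst C) (snd C) l (snd C') /\ fst C' = act_env l (fst C).

Definition red_star : config -> config -> Prop := clos_refl_trans config red.

Definition barb (C : config) (c : chan) : Prop := exposed (fst C) c.
Definition wbarb (C : config) (c : chan) : Prop :=
  exists C', red_star C C' /\ barb C' c.

Definition barb_preserving (R : config -> config -> Prop) : Prop :=
  forall C1 C2 c, R C1 C2 -> wbarb C1 c -> wbarb C2 c.

Definition reduction_closed (R : config -> config -> Prop) : Prop :=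
  forall C1 C2 C1', R C1 C2 -> red C1 C1' ->
    exists C2', red_star C2 C2' /\ R C1' C2'.

Definition contextual (R : config -> config -> Prop) : Prop :=
  forall G1 W1 G2 W2 W, R (G1, W1) (G2, W2) -> closed_sys W ->
    R (G1, SPar W1 W) (G2, SPar W2 W).

(* Reduction barbed congruence: the largest symmetric, barb preserving,
   reduction closed and contextual relation on configurations, i.e. the union
   of all such relations. *)
Definition rbc (C1 C2 : config) : Prop :=
  exists R : config -> config -> Prop,
    (forall D1 D2, R D1 D2 -> is_config D1 /\ is_config D2) /\
    (forall D1 D2, R D1 D2 -> R D2 D1) /\
    barb_preserving R /\ reduction_closed R /\ contextual R /\ R C1 C2.

Fixpoint wf_s (G : env) (W : sys) : Prop :=
  match W with
  | SProc _ => True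
  | SActRcv c _ _ => exposed G c
  | SPar W1 W2 => wf_s G W1 /\ wf_s G W2
  | SRes c n v W1 => wf_s (upd G c (n, v)) W1
  end.

Definition well_formed (C : config) : Prop := is_config C /\ wf_s (fst C) (snd C).

End CCCP.

(* Suppose [c] is idle in [G1] but exposed in [G2], and pick [d] free in
   neither [W1] nor [W2].  The tester [[exp(c)] sigma.S, 0], where [S] sends on
   [d] forever, takes its else branch next to [W1] and becomes inert.  Next to
   [W2] a conditional blocks time, so [c] stays exposed until the tester takes
   its then branch, after which [d] is exposed whenever time can pass; by time
   progress (every well-formed configuration reaches, through instantaneous
   steps, one that can let time pass) [d] is exposed in some reduct of
   [W2 | tester].  On the left, letting time pass [G1 d] times makes [d] idle,
   and since [d] is not free it stays idle forever.  Reduction closure lets the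
   right side follow these reductions while keeping its weak barb on [d],
   contradicting barb preservation. *)

From Stdlib Require Import List PeanoNat Lia Relations.Relation_Operators
  FunctionalExtensionality Classical.
Import ListNotations.
Set Implicit Arguments.

Section Idle.
Variable Sg : signature.
Hypothesis delta_pos : forall v : val Sg, 1 <= delta Sg v.

Lemma swap_ch_involutive a b e : swap_ch a b (swap_ch a b e) = e.
Proof.
  unfold swap_ch.
  destruct (Nat.eqb_spec e a) as [->|]; [|destruct (Nat.eqb_spec e b) as [->|]].
  - destruct (Nat.eqb_spec b a); [congruence|]. rewrite Nat.eqb_refl; reflexivity.
  - rewrite Nat.eqb_refl; reflexivity.
  - destruct (Nat.eqb_spec e a), (Nat.eqb_spec e b); congruence.
Qed.

Lemma swap_ch_eq a b e e' : swap_ch a b e = e' <-> e = swap_ch a b e'.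
Proof. split; intros E; subst; rewrite swap_ch_involutive; reflexivity. Qed.

Lemma ch_in_p_swap a b e (P : proc Sg) :
  ch_in_p e (swap_p a b P) <-> ch_in_p (swap_ch a b e) P.
Proof.
  induction P as [| | | | | [|] | | |]; simpl; rewrite ?swap_ch_eq; tauto.
Qed.

Lemma free_ch_swap a b e (W : sys Sg) :
  free_ch e (swap_s a b W) <-> free_ch (swap_ch a b e) W.
Proof.
  induction W; simpl; rewrite ?ch_in_p_swap, ?swap_ch_eq; tauto.
Qed.

Lemma ch_in_sigma_n e k (P : proc Sg) : ch_in_p e (sigma_n k P) -> ch_in_p e P.
Proof. induction k; simpl; auto. Qed.

Lemma ch_in_subst_p e x w (P : proc Sg) : ch_in_p e (subst_p x w P) -> ch_in_p e P.
Proof.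
  induction P as [| ? y | | | | [|] | | |]; simpl; try destruct (Nat.eqb y x); simpl; tauto.
Qed.

Lemma ch_in_subst_X e X R (P : proc Sg) :
  ch_in_p e (subst_X X R P) -> ch_in_p e P \/ ch_in_p e R.
Proof.
  induction P as [| | | | | | Y | | Y]; simpl; try destruct (Nat.eqb Y X); simpl; tauto.
Qed.

Lemma trans_fresh d G (W : sys Sg) l W' :
  trans G W l W' -> ~ free_ch d W ->
  ~ free_ch d W' /\ forall v, l <> LSnd Sg d v.
Proof.
  induction 1 as [G c e P v | | | | | | | | | | | | | | | | | |
                  G X P l W _ IH | | | | | | |
                  G c n v W W' l Hl _ IH | G c d' n v W l W' Hd' _ IH];
    simpl in *; intro Hf;
    try solve [split; [tauto | discriminate]
              | intuition (discriminate || eauto using ch_in_subst_p)].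
  - split; [intro Hin; apply Hf; right; eapply ch_in_sigma_n; eauto|].
    intros v' [= -> _]; tauto.
  - apply IH; intro Hin; destruct (ch_in_subst_X _ _ _ _ Hin); tauto.
  - destruct (Nat.eq_dec c d) as [->|].
    + split; [tauto|]. intros v' ->; apply Hl; reflexivity.
    + destruct IH; tauto.
  - apply IH. rewrite free_ch_swap. unfold swap_ch. intros [Hne Hin].
    destruct (Nat.eqb_spec d c) as [->|]; [apply Hd'; split; auto|].
    destruct (Nat.eqb_spec d d') as [->|]; [tauto|]. apply Hf; split; auto.
Qed.

Lemma wf_s_exposed_mono (W : sys Sg) (G G' : env Sg) :
  (forall e, free_ch e W -> exposed G e -> exposed G' e) -> wf_s G W -> wf_s G' W.
Proof.
  revert G G'; induction W as [| | W1 IH1 W2 IH2 | c n v W IH]; simpl; intros G G' HG Hw;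
    auto.
  - destruct Hw; split; [eapply IH1 | eapply IH2]; eauto.
  - eapply IH; [|eauto]. intros e He. unfold upd, exposed; simpl.
    destruct (Nat.eqb_spec e c); auto. apply HG; auto.
Qed.

Lemma tx_upd_exposed G c v e : exposed G e -> exposed (@tx_upd Sg G c v) e.
Proof.
  unfold tx_upd, exposed, upd; intro H.
  destruct (Nat.eqb_spec e c) as [->|]; auto.
  destruct (Nat.eqb_spec (fst (G c)) 0); simpl; [contradiction | lia].
Qed.

Lemma tx_upd_exposed_self G c v : exposed (@tx_upd Sg G c v) c.
Proof.
  unfold tx_upd, exposed, upd. rewrite Nat.eqb_refl.
  specialize (delta_pos v). destruct (Nat.eqb_spec (fst (G c)) 0); simpl; lia.
Qed.

Lemma tx_upd_le G c v e : fst (G e) <= fst (@tx_upd Sg G c v e).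
Proof.
  unfold tx_upd, upd. destruct (Nat.eqb_spec e c) as [->|]; auto.
  destruct (Nat.eqb_spec (fst (G c)) 0); simpl; lia.
Qed.

Lemma delta_le_tx_upd G c v : delta Sg v <= fst (@tx_upd Sg G c v c).
Proof.
  unfold tx_upd, upd. rewrite Nat.eqb_refl.
  destruct (Nat.eqb_spec (fst (G c)) 0); simpl; lia.
Qed.

Lemma upd_upd (G : env Sg) c p q : upd (upd G c p) c q = upd G c q.
Proof. extensionality e; unfold upd; destruct (e =? c); reflexivity. Qed.

Lemma act_env_upd l (G : env Sg) c p : ~ ch_in_label c l ->
  act_env l (upd G c p) = upd (act_env l G) c (act_env l (upd G c p) c).
Proof.
  intro Hl. extensionality e. unfold upd at 2.
  destruct (Nat.eqb_spec e c) as [->|]; [reflexivity|].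
  destruct l; simpl in *; unfold tx_upd, upd; simpl;
    repeat match goal with
           | |- context [?x =? ?y] =>
               lazymatch x with context [_ =? _] => fail | _ => destruct (Nat.eqb_spec x y) end
           end;
    subst; simpl in *; congruence.
Qed.

Lemma tx_upd_upd (G : env Sg) c p w :
  tx_upd (upd G c p) c w = upd G c (tx_upd (upd G c p) c w c).
Proof.
  unfold tx_upd at 1. rewrite upd_upd. f_equal.
  unfold tx_upd, upd. rewrite Nat.eqb_refl. reflexivity.
Qed.

Lemma wf_s_swap (W : sys Sg) (G : env Sg) a b :
  wf_s G W -> wf_s (fun e => G (swap_ch a b e)) (swap_s a b W).
Proof.
  revert G; induction W as [| | W1 IH1 W2 IH2 | c n v W IH]; simpl; intros G Hw; auto.
  - unfold exposed in *. rewrite swap_ch_involutive. assumption.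
  - destruct Hw; split; auto.
  - eapply wf_s_exposed_mono; [|exact (IH _ Hw)]. intros e _. unfold exposed, upd.
    destruct (Nat.eqb_spec (swap_ch a b e) c), (Nat.eqb_spec e (swap_ch a b c)); subst;
      rewrite ?swap_ch_involutive in *; congruence.
Qed.

Lemma upd_swap_ch (G : env Sg) c d p e :
  c = d \/ e <> c -> upd G c p (swap_ch c d e) = upd G d p e.
Proof.
  unfold upd, swap_ch; intro He.
  destruct (Nat.eqb_spec e c), (Nat.eqb_spec e d); subst;
    rewrite ?Nat.eqb_refl; try reflexivity.
  - destruct He; congruence.
  - destruct (Nat.eqb_spec e c); congruence.
Qed.

Lemma trans_wf G (W : sys Sg) l W' :
  trans G W l W' -> wf_s G W -> wf_s (act_env l G) W'.
Proof.
  induction 1 as [| | | | | | | | | | | | | | | | | | | | | | | | | |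
                  G c d n v W l W' Hd _ IH]; simpl in *; intro Hw; try tauto.
  - apply tx_upd_exposed_self.
  - eapply wf_s_exposed_mono; [|eassumption]. intros; apply tx_upd_exposed; assumption.
  - unfold exposed; simpl; lia.
  - rewrite <- surjective_pairing, <- tx_upd_upd; auto.
  - rewrite <- surjective_pairing, <- act_env_upd; auto.
  - apply IH; simpl.
    eapply wf_s_exposed_mono; [|exact (wf_s_swap _ _ c d Hw)].
    intros e He. rewrite free_ch_swap in He. unfold exposed.
    rewrite upd_swap_ch; [tauto|].
    destruct (Nat.eq_dec c d) as [|Hcd]; [left; assumption | right; intros ->].
    apply Hd; split; [congruence|].
    unfold swap_ch in He; rewrite Nat.eqb_refl in He; assumption.
Qed.

Lemma closed_e_incl xs ys : incl xs ys -> forall e : exp Sg, closed_e xs e -> closed_e ys e.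
Proof.
  intros Hi. fix IH 1. intros [v|y|f es]; simpl; auto.
  induction es as [|e es IHes]; simpl; auto.
  intros [He Hes]; split; [exact (IH e He) | exact (IHes Hes)].
Qed.

Lemma eval_closed : forall e : exp Sg, closed_e [] e -> exists v, eval e = Some v.
Proof.
  fix IH 1. intros [v|y|f es]; simpl; eauto.
  - intros [].
  - match goal with |- ?A es -> exists v, match ?F es with _ => _ end = _ =>
      assert (HF : forall l, A l -> exists vs, F l = Some vs) end.
    { induction l as [|e l IHl]; simpl; eauto. intros [He Hl].
      destruct (IH e He) as [v ->], (IHl Hl) as [vs ->]; eauto. }
    intro Hes; destruct (HF es Hes) as [vs ->]; eauto.
Qed.

Lemma closed_p_incl (P : proc Sg) xs ys Xs Ys : incl xs ys -> incl Xs Ys ->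
  closed_p xs Xs P -> closed_p ys Ys P.
Proof.
  revert xs ys Xs Ys.
  induction P as [c e P IH|c x P IHP Q IHQ|P IH|P IH|P IHP Q IHQ|[e1 e2|c] P IHP Q IHQ
                 |X| |X P IH]; simpl; intros xs ys Xs Ys Hx HX Hc; auto.
  - destruct Hc; split; [eapply closed_e_incl|eapply IH]; eauto.
  - destruct Hc; split; [eapply IHP|eapply IHQ]; eauto.
    intros a [<-|Ha]; [left|right]; auto.
  - eapply IH; eauto.
  - eapply IH; eauto.
  - destruct Hc; split; [eapply IHP|eapply IHQ]; eauto.
  - destruct Hc as [[H1 H2] [HP HQ]].
    repeat split; eauto using closed_e_incl.
  - destruct Hc as [_ [HP HQ]]; repeat split; eauto.
  - eapply IH; [eassumption| |eassumption].
    intros a [<-|Ha]; [left|right]; auto.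
Qed.

Lemma closed_subst_X (P : proc Sg) X R xs Xs :
  closed_p xs (X :: Xs) P -> closed_p [] [] R -> closed_p xs Xs (subst_X X R P).
Proof.
  revert X xs Xs.
  induction P as [c e P IH|c x P IHP Q IHQ|P IH|P IH|P IHP Q IHQ|b P IHP Q IHQ|Y| |Y P IH];
    simpl; intros X xs Xs Hc HR;
    try solve [auto | destruct Hc; split; auto | destruct Hc as [? []]; split; auto].
  - destruct (Nat.eqb_spec Y X) as [->|HY].
    + eapply closed_p_incl; [| |exact HR]; intros a [].
    + destruct Hc; [congruence | assumption].
  - destruct (Nat.eqb_spec Y X) as [->|]; simpl; [|apply IH; auto];
      eapply closed_p_incl; try exact Hc; intros a; simpl; tauto.
Qed.

Lemma unguarded_closed (P : proc Sg) Y xs Xs :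
  closed_p xs Xs P -> unguarded Y P -> In Y Xs.
Proof.
  revert xs Xs.
  induction P as [| |P IH|P IH|P IHP Q IHQ| |Z| |Z P IH]; simpl; intros xs Xs Hc Hu;
    try tauto.
  - eauto.
  - destruct Hc, Hu; eauto.
  - subst; assumption.
  - destruct Hu as [HZ Hu]. destruct (IH _ _ Hc Hu); [congruence | assumption].
Qed.

Lemma unguarded_subst (P : proc Sg) X R Y :
  unguarded Y (subst_X X R P) -> unguarded Y P \/ unguarded Y R.
Proof.
  induction P as [| |P IH|P IH|P IHP Q IHQ| |Z| |Z P IH]; simpl; intro Hu; try tauto.
  - destruct (Nat.eqb Z X); simpl in *; tauto.
  - destruct (Nat.eqb Z X); simpl in *; [tauto|].
    destruct Hu as [HZ Hu]; destruct (IH Hu); tauto.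
Qed.

Lemma guarded_subst_X (P : proc Sg) X R :
  guarded_rec P -> guarded_rec R -> closed_p [] [] R -> guarded_rec (subst_X X R P).
Proof.
  induction P as [| |P IH|P IH|P IHP Q IHQ| |Z| |Z P IH]; simpl; intros Hg HgR HcR;
    try (destruct Hg; split; eauto; fail); eauto.
  - destruct (Nat.eqb Z X); simpl; auto.
  - destruct (Nat.eqb Z X); simpl; auto.
    destruct Hg as [Hu Hg]; split; auto. intro Hu'.
    destruct (unguarded_subst _ _ _ _ Hu') as [|HR]; auto.
    destruct (unguarded_closed _ _ _ _ HcR HR).
Qed.

(* Unfolding a guarded [PFix] strictly decreases this measure
   ([unguarded_depth_subst_X]). *)
Fixpoint unguarded_depth (P : proc Sg) : nat :=
  match P with
  | PSnd _ _ _ | PRcv _ _ _ _ | PIf _ _ _ => 1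
  | PTau P1 | PFix _ P1 => S (unguarded_depth P1)
  | PSum P1 Q1 => S (unguarded_depth P1 + unguarded_depth Q1)
  | PSigma _ | PVar _ _ | PNil _ => 0
  end.

Lemma unguarded_depth_subst_X (P : proc Sg) X R :
  ~ unguarded X P -> unguarded_depth (subst_X X R P) = unguarded_depth P.
Proof.
  induction P as [| |P IH|P IH|P IHP Q IHQ| |Z| |Z P IH]; simpl; intro Hu; auto.
  - rewrite IHP, IHQ; tauto.
  - destruct (Nat.eqb_spec Z X); [congruence | reflexivity].
  - destruct (Nat.eqb_spec Z X); simpl; auto. rewrite IH; tauto.
Qed.

(* A sufficient condition for letting time pass ([ready_sig]). *)
Inductive ready_p (G : env Sg) : proc Sg -> Prop :=
  | ready_nil : ready_p G (PNil Sg)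
  | ready_sigma P : ready_p G (PSigma P)
  | ready_rcv c x P Q : idle G c -> ready_p G (PRcv c x P Q)
  | ready_sum P Q : ready_p G P -> ready_p G Q -> ready_p G (PSum P Q)
  | ready_fix X P : ready_p G (subst_X X (PFix X P) P) -> ready_p G (PFix X P).

Fixpoint ready (G : env Sg) (W : sys Sg) : Prop :=
  match W with
  | SProc P => ready_p G P
  | SActRcv c _ _ => exposed G c
  | SPar W1 W2 => ready G W1 /\ ready G W2
  | SRes c n v W1 => ready (upd G c (n, v)) W1
  end.

Lemma ready_p_sig G P : ready_p G P -> exists P', trans G (SProc P) (LSig Sg) (SProc P').
Proof.
  induction 1 as [| | |P Q _ [P' HP] _ [Q' HQ]|X P _ [P' HP]];
    eexists; eauto using trans.
Qed.

Lemma ready_sig (W : sys Sg) G : ready G W -> exists W', trans G W (LSig Sg) W'.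
Proof.
  revert G; induction W as [P|c x P|W1 IH1 W2 IH2|c n v W IH]; simpl; intros G H.
  - destruct (ready_p_sig H); eauto.
  - unfold exposed in H. destruct (Nat.eq_dec (fst (G c)) 1).
    + eexists; apply tEndRcv; assumption.
    + eexists; apply tActRcv; lia.
  - destruct H as [H1 H2]. destruct (IH1 _ H1), (IH2 _ H2). eexists; eauto using trans.
  - destruct (IH _ H). eexists; apply tResV; simpl; eauto.
Qed.

Inductive eventually_ready : env Sg -> sys Sg -> Prop :=
  | ev_ready G W : ready G W -> eventually_ready G W
  | ev_step G W l W' : (l = LTau Sg \/ exists c v, l = LSnd Sg c v) ->
      trans G W l W' -> eventually_ready (act_env l G) W' -> eventually_ready G W.

(* A receiver on [c] at depth [n] under sums and recursion; [n] is invariant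
   under unfolding ([rcv_path_subst_X]), so it serves as induction measure. *)
Inductive rcv_path (c : chan) : proc Sg -> nat -> Prop :=
  | rcv_path_rcv x P Q : rcv_path c (PRcv c x P Q) 0
  | rcv_path_suml P Q n : rcv_path c P n -> rcv_path c (PSum P Q) (S n)
  | rcv_path_sumr P Q n : rcv_path c Q n -> rcv_path c (PSum P Q) (S n)
  | rcv_path_fix X P n : rcv_path c P n -> rcv_path c (PFix X P) (S n).

Lemma rcv_p_rcv_path c (P : proc Sg) : rcv_p P c -> exists n, rcv_path c P n.
Proof.
  induction P as [| c' | | |P IHP Q IHQ| | | |X P IH]; simpl; intro H; try tauto.
  - subst; eexists; constructor.
  - destruct H as [H|H]; [destruct (IHP H) | destruct (IHQ H)]; eexists;
      eauto using rcv_path.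
  - destruct (IH H); eexists; eauto using rcv_path.
Qed.

Lemma rcv_path_rcv_p c P n : rcv_path c P n -> rcv_p P c.
Proof. induction 1; simpl; auto. Qed.

Lemma rcv_path_subst_X c X R P n : rcv_path c P n -> rcv_path c (subst_X X R P) n.
Proof.
  induction 1 as [| | |Y P n Hp IH]; simpl; eauto using rcv_path.
  destruct (Nat.eqb Y X); eauto using rcv_path.
Qed.

Lemma rcv_p_subst_X c X R (P : proc Sg) :
  rcv_p (subst_X X R P) c -> rcv_p P c \/ rcv_p R c.
Proof.
  induction P as [| | | | | |Y| |Y]; simpl; intro H; try tauto;
    destruct (Nat.eqb Y X); simpl in *; tauto.
Qed.

Lemma rcv_path_trans G c v n P : rcv_path c P n -> idle G c ->
  exists x P', trans G (SProc P) (LRcv Sg c v) (SActRcv c x P') /\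
    (closed_p [] [] P -> guarded_rec P -> closed_p [x] [] P' /\ guarded_rec P').
Proof.
  revert P; induction n as [|n IH]; intros P Hp Hi;
    inversion Hp as [x P0 Q|P0 Q m Hm|P0 Q m Hm|X P0 m Hm];
    subst.
  - exists x, P0. split; [constructor; assumption | simpl; tauto].
  - destruct (IH _ Hm Hi) as [x [P' [Ht Hc]]]. exists x, P'. split.
    + apply tSumRcvL; [assumption|]. split; [assumption|]. eapply rcv_path_rcv_p; eauto.
    + simpl; intros [] []; auto.
  - destruct (IH _ Hm Hi) as [x [P' [Ht Hc]]]. exists x, P'. split.
    + apply tSumRcvR; [assumption|]. split; [assumption|]. eapply rcv_path_rcv_p; eauto.
    + simpl; intros [] []; auto.
  - destruct (IH (subst_X X (PFix X P0) P0)) as [x [P' [Ht Hc]]];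
      [apply rcv_path_subst_X; assumption | assumption|].
    exists x, P'. split; [apply tRec; assumption|].
    simpl; intros HcP [Hu Hg]. apply Hc.
    + apply closed_subst_X; assumption.
    + apply guarded_subst_X; simpl; auto.
Qed.

Lemma ready_p_tx_upd G c v P : ready_p G P -> ~ (idle G c /\ rcv_p P c) ->
  ready_p (tx_upd G c v) P.
Proof.
  induction 1 as [| |c' x P Q Hi|P Q _ IHP _ IHQ|X P _ IH]; simpl; intro Hn;
    constructor; try tauto.
  - unfold idle, tx_upd, upd in *. destruct (Nat.eqb_spec c' c); [subst; tauto | assumption].
  - apply IH. intros [Hi Hr]. destruct (rcv_p_subst_X _ _ _ _ Hr); simpl in *; tauto.
Qed.

Fixpoint sys_size (W : sys Sg) : nat :=
  match W with
  | SProc _ | SActRcv _ _ _ => 1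
  | SPar W1 W2 => S (sys_size W1 + sys_size W2)
  | SRes _ _ _ W1 => S (sys_size W1)
  end.

Lemma trans_rcv_exists c v (W : sys Sg) G :
  exists W', trans G W (LRcv Sg c v) W' /\ sys_size W' = sys_size W /\
    (ready G W -> ready (tx_upd G c v) W') /\ (closed_s [] W -> closed_s [] W').
Proof.
  revert G; induction W as [P|c' x P|W1 IH1 W2 IH2|c' n v' W IH]; intros G.
  - destruct (classic (idle G c /\ rcv_p P c)) as [[Hi Hr]|Hn].
    + destruct (rcv_p_rcv_path _ _ Hr) as [n Hp].
      destruct (rcv_path_trans v Hp Hi) as [x [P' [Ht Hc]]].
      exists (SActRcv c x P'); simpl.
      split; [|split; [|split]]; auto using tx_upd_exposed_self; tauto.
    + exists (SProc P); simpl.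
      split; [|split; [|split]]; auto using ready_p_tx_upd.
      apply tRcvIgn; unfold rcv_conf; simpl; tauto.
  - exists (SActRcv c' x P); simpl.
    split; [|split; [|split]]; auto using tx_upd_exposed.
    apply tRcvIgn; unfold rcv_conf; simpl; tauto.
  - destruct (IH1 G) as [W1' [H1 [S1 [R1 C1]]]], (IH2 G) as [W2' [H2 [S2 [R2 C2]]]].
    exists (SPar W1' W2'); simpl.
    split; [apply tRcvPar; assumption | split; [lia | split; tauto]].
  - destruct (Nat.eq_dec c' c) as [->|Hne].
    + exists (SRes c n v' W); simpl.
      split; [|split; [|split]]; auto.
      * apply tRcvIgn; unfold rcv_conf; simpl; tauto.
      * unfold tx_upd; rewrite upd_upd; auto.
    + destruct (IH (upd G c' (n, v'))) as [W' [Ht [HS [HR HC]]]].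
      eexists. split; [apply tResV; [simpl; auto | exact Ht]|].
      simpl; split; [|split]; auto. intro Hr.
      rewrite <- surjective_pairing.
      pose proof (@act_env_upd (LRcv Sg c v) G c' (n, v')) as E; simpl in E.
      rewrite <- E; auto.
Qed.

Lemma eventually_ready_sum G (P Q : proc Sg) :
  eventually_ready G (SProc P) -> eventually_ready G (SProc Q) ->
  eventually_ready G (SProc (PSum P Q)).
Proof.
  intros HP HQ. inversion HP as [? ? RP|? ? l W' Hl Ht Hev]; subst.
  - inversion HQ as [? ? RQ|? ? l W' Hl Ht Hev]; subst.
    + apply ev_ready; simpl in *; constructor; assumption.
    + eapply ev_step; [eassumption | apply tSumR; eassumption | assumption].
  - eapply ev_step; [eassumption | apply tSumL; eassumption | assumption].
Qed.

Lemma eventually_ready_proc n (P : proc Sg) G :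
  unguarded_depth P <= n -> closed_p [] [] P -> guarded_rec P ->
  eventually_ready G (SProc P).
Proof.
  revert P G; induction n as [|n IH]; intros P G Hn Hc Hg;
    destruct P as [c e P|c x P Q|P|P|P Q|b P Q|X| |X P]; simpl in *; try lia;
    try (apply ev_ready; constructor; fail).
  - destruct Hc as [He _]. destruct (eval_closed _ He) as [v Hv].
    eapply ev_step; [right; eauto | apply tSnd; eassumption|].
    apply ev_ready. specialize (delta_pos v).
    destruct (delta Sg v); [lia | constructor].
  - destruct (classic (idle G c)).
    + apply ev_ready; constructor; assumption.
    + eapply ev_step; [left; reflexivity | apply tRcvLate; assumption|].
      apply ev_ready; assumption.
  - eapply ev_step; [left; reflexivity | apply tTau | apply IH; auto; lia].
  - destruct Hc, Hg. apply eventually_ready_sum; apply IH; auto; lia.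
  - destruct (classic (beval G b)).
    + eapply ev_step; [left; reflexivity | apply tThen; assumption |].
      apply ev_ready; constructor.
    + eapply ev_step; [left; reflexivity | apply tElse; assumption |].
      apply ev_ready; constructor.
  - destruct Hg as [Hu Hg].
    assert (Hev : eventually_ready G (SProc (subst_X X (PFix X P) P))).
    { apply IH.
      - rewrite unguarded_depth_subst_X; [lia | assumption].
      - apply closed_subst_X; assumption.
      - apply guarded_subst_X; simpl; auto. }
    inversion Hev as [? ? R|? ? l W' Hl Ht Hev']; subst.
    + apply ev_ready; simpl in *; constructor; assumption.
    + eapply ev_step; [eassumption | apply tRec; eassumption | assumption].
Qed.

Lemma eventually_ready_par_r G (W2 : sys Sg) W1 :
  eventually_ready G W2 -> ready G W1 -> eventually_ready G (SPar W1 W2).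
Proof.
  intro Hev; revert W1; induction Hev as [G W2 R2|G W2 l W2' [->|[c [v ->]]] Ht _ IH];
    intros W1 R1.
  - apply ev_ready; simpl; auto.
  - eapply ev_step; [left; reflexivity | apply tTauParR; eassumption | auto].
  - destruct (trans_rcv_exists c v W1 G) as [W1' [Ht1 [_ [HR1 _]]]].
    eapply ev_step; [right; eauto | eapply tSyncR; eassumption | auto].
Qed.

(* Induction on [W1]'s progress; [W2] changes by inputs along the way, hence
   the hypothesis for all systems of the same size. *)
Lemma eventually_ready_par G (W1 W2 : sys Sg) :
  eventually_ready G W1 -> closed_s [] W2 -> wf_s G W2 ->
  (forall G' W2', sys_size W2' = sys_size W2 -> closed_s [] W2' -> wf_s G' W2' ->
     eventually_ready G' W2') ->
  eventually_ready G (SPar W1 W2).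
Proof.
  intro Hev; revert W2; induction Hev as [G W1 R1|G W1 l W1' [->|[c [v ->]]] Ht _ IH];
    intros W2 Hc Hw Hall.
  - apply eventually_ready_par_r; auto.
  - eapply ev_step; [left; reflexivity | apply tTauParL; eassumption | auto].
  - destruct (trans_rcv_exists c v W2 G) as [W2' [Ht2 [HS [_ HC]]]].
    eapply ev_step; [right; eauto | eapply tSyncL; eassumption |].
    apply IH; auto.
    + apply (trans_wf Ht2 Hw).
    + intros; apply Hall; auto; congruence.
Qed.

Lemma eventually_ready_res E (W : sys Sg) G c n v :
  eventually_ready E W -> E = upd G c (n, v) -> eventually_ready G (SRes c n v W).
Proof.
  intro Hev; revert G c n v;
    induction Hev as [E W R|E W l W' Hl Ht _ IH]; intros G c n v ->.
  - apply ev_ready; simpl; assumption.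
  - destruct (classic (exists w, l = LSnd Sg c w)) as [[w ->]|Hn].
    + eapply ev_step; [left; reflexivity | apply tResI; eassumption|].
      apply IH; simpl. rewrite <- surjective_pairing. apply tx_upd_upd.
    + assert (~ ch_in_label c l).
      { destruct Hl as [->|[c' [v' ->]]]; simpl; [tauto|]. intros ->; eauto. }
      eapply ev_step; [eassumption | apply tResV; eassumption|].
      apply IH. rewrite <- surjective_pairing. apply act_env_upd; assumption.
Qed.

Lemma eventually_ready_size n (W : sys Sg) G :
  sys_size W <= n -> closed_s [] W -> wf_s G W -> eventually_ready G W.
Proof.
  revert W G; induction n as [|n IH]; intros W G Hn Hc Hw;
    destruct W as [P|c x P|W1 W2|c m v W]; simpl in *; try lia.
  - destruct Hc; eapply eventually_ready_proc; eauto.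
  - apply ev_ready; simpl; assumption.
  - destruct Hc, Hw. apply eventually_ready_par; auto.
    + apply IH; auto; lia.
    + intros; apply IH; auto; lia.
  - eapply eventually_ready_res; [|reflexivity]. apply IH; auto; lia.
Qed.

Theorem time_progress G (W : sys Sg) : well_formed (G, W) -> eventually_ready G W.
Proof. intros [Hc Hw]. eapply eventually_ready_size; eauto. Qed.

Lemma red_trans G (W : sys Sg) l W' : (forall c v, l <> LRcv Sg c v) ->
  trans G W l W' -> red (G, W) (act_env l G, W').
Proof. intros Hl Ht. exists l. simpl; auto. Qed.

Lemma red_ev_step G (W : sys Sg) l W' : (l = LTau Sg \/ exists c v, l = LSnd Sg c v) ->
  trans G W l W' -> red (G, W) (act_env l G, W').
Proof.
  intros Hl; apply red_trans. intros c v ->. destruct Hl as [|[? [? ?]]]; discriminate.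
Qed.

Lemma wbarb_red (C C' : config Sg) e : red C C' -> wbarb C' e -> wbarb C e.
Proof.
  intros Hr [C'' [H1 H2]]. exists C''. split; [eapply rt_trans; [apply rt_step|]|]; eauto.
Qed.

Lemma red_wf (C C' : config Sg) : red C C' -> wf_s (fst C) (snd C) -> wf_s (fst C') (snd C').
Proof. destruct C, C'; intros [l [_ [Ht ->]]]; exact (trans_wf Ht). Qed.

Lemma red_star_invariant (P : config Sg -> Prop) :
  (forall C C', red C C' -> P C -> P C') ->
  forall C C', red_star C C' -> P C -> P C'.
Proof. intros HP C C' H; induction H; eauto. Qed.

Lemma reduction_closed_star (R : config Sg -> config Sg -> Prop) :
  reduction_closed R -> forall C1 C1' C2, red_star C1 C1' -> R C1 C2 ->
  exists C2', red_star C2 C2' /\ R C1' C2'.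
Proof.
  intros Hrc C1 C1' C2 H; revert C2;
    induction H as [C1 C1' Hr|C1|C1 C1' C1'' _ IH1 _ IH2]; intros C2 HR.
  - destruct (Hrc _ _ _ HR Hr) as [C2' []]; eauto.
  - exists C2; split; [apply rt_refl | assumption].
  - destruct (IH1 _ HR) as [C2' [H1 H2]], (IH2 _ H2) as [C2'' [H3 H4]].
    exists C2''; split; [eapply rt_trans|]; eauto.
Qed.

Section Tester.
Variables c d : chan.

Definition sender : proc Sg := PFix 0 (PSnd d (EVal Sg (err Sg)) (PVar Sg 0)).
Definition sender_unfolded : proc Sg := PSnd d (EVal Sg (err Sg)) sender.
Definition tester : proc Sg := PIf (CExp Sg c) sender (PNil Sg).

Definition is_rcv (l : label Sg) : Prop := exists e v, l = LRcv Sg e v.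

Lemma trans_sender_unfolded G l W : trans G (SProc sender_unfolded) l W ->
  (l = LSnd Sg d (err Sg) /\ W = SProc (sigma_n (delta Sg (err Sg)) sender)) \/
  (is_rcv l /\ W = SProc sender_unfolded).
Proof.
  intro H; inversion H; subst.
  - left. match goal with Hv : eval _ = Some _ |- _ => injection Hv as <- end. auto.
  - right. split; [do 2 eexists|]; eauto.
Qed.

Lemma trans_sender G l W : trans G (SProc sender) l W ->
  (l = LSnd Sg d (err Sg) /\ W = SProc (sigma_n (delta Sg (err Sg)) sender)) \/
  (is_rcv l /\ (W = SProc sender \/ W = SProc sender_unfolded)).
Proof.
  intro H; inversion H; subst.
  - right. split; [do 2 eexists|]; eauto.
  - match goal with Ht : trans _ (SProc (subst_X _ _ _)) _ _ |- _ =>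
      apply trans_sender_unfolded in Ht; destruct Ht as [[]|[]]; auto end.
Qed.

Lemma trans_sigma G P l W : trans G (SProc (@PSigma Sg P)) l W ->
  (l = LSig Sg /\ W = SProc P) \/ (is_rcv l /\ W = SProc (PSigma P)).
Proof.
  intro H; inversion H; subst; auto.
  right; split; [do 2 eexists|]; eauto.
Qed.

Lemma trans_tester G l W : exposed G c -> trans G (SProc tester) l W ->
  (l = LTau Sg /\ W = SProc (PSigma sender)) \/ (is_rcv l /\ W = SProc tester).
Proof.
  intros Hc H; inversion H; subst; [right | left | contradiction].
  - split; [do 2 eexists|]; eauto.
  - auto.
Qed.

(* As long as the tester is the conditional, time cannot pass, so [c] stays
   exposed; while the sender sleeps after a broadcast, [d] stays exposed at
   least as long (the [+ 1] covers the first [PSigma sender]). *)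
Definition tester_state (G : env Sg) (X : sys Sg) : Prop :=
  (X = SProc tester /\ exposed G c) \/
  (exists j, X = SProc (sigma_n j sender) /\ j <= fst (G d) + 1) \/
  X = SProc sender_unfolded.

Lemma tester_state_send G v :
  tester_state (tx_upd G d v) (SProc (sigma_n (delta Sg v) sender)).
Proof.
  right; left. eexists; split; [reflexivity|]. pose proof (delta_le_tx_upd G d v); lia.
Qed.

Lemma tester_state_trans G X l X' :
  tester_state G X -> trans G X l X' -> tester_state (act_env l G) X'.
Proof.
  intros [[-> Hc] | [[[|j] [-> Hj]] | ->]] Ht.
  - apply trans_tester in Ht; [|assumption].
    destruct Ht as [[-> ->]|[[e [v ->]] ->]].
    + right; left. exists 1; simpl; split; [reflexivity | lia].
    + left. split; [reflexivity | apply tx_upd_exposed; assumption].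
  - apply trans_sender in Ht.
    destruct Ht as [[-> ->]|[[e [v ->]] [-> | ->]]]; [apply tester_state_send| |].
    + right; left. exists 0; split; [reflexivity | lia].
    + right; right; reflexivity.
  - apply trans_sigma in Ht. destruct Ht as [[-> ->]|[[e [v ->]] ->]].
    + right; left. exists j; simpl; split; [reflexivity | lia].
    + right; left. exists (S j); split; [reflexivity|].
      pose proof (tx_upd_le G e v d); simpl; lia.
  - apply trans_sender_unfolded in Ht.
    destruct Ht as [[-> ->]|[[e [v ->]] ->]]; [apply tester_state_send|].
    right; right; reflexivity.
Qed.

Definition with_tester (G : env Sg) (Y : sys Sg) : Prop :=
  exists W X, Y = SPar W X /\ tester_state G X.

Lemma with_tester_trans G Y l Y' :
  with_tester G Y -> trans G Y l Y' -> ~ is_rcv l -> with_tester (act_env l G) Y'.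
Proof.
  intros [W [X [-> HX]]] Ht Hl.
  inversion Ht; subst;
    try (exfalso; apply Hl; do 2 eexists; reflexivity);
    do 2 eexists; split; try reflexivity; eauto using tester_state_trans.
  (* the tester receives: the environments of the input and the output agree *)
  match goal with H : trans _ _ (LRcv _ _ _) _ |- _ => exact (tester_state_trans HX H) end.
Qed.

Lemma send_wbarb G (W X X' : sys Sg) v :
  trans G X (LSnd Sg d v) X' -> wbarb (G, SPar W X) d.
Proof.
  intros Ht. destruct (trans_rcv_exists d v W G) as [W' [Hw _]].
  exists (tx_upd G d v, SPar W' X'). split.
  - apply rt_step. apply (red_trans (l := LSnd Sg d v)); [discriminate|].
    eapply tSyncR; eassumption.
  - apply tx_upd_exposed_self.
Qed.

Lemma trans_sender_send G :
  trans G (SProc sender) (LSnd Sg d (err Sg)) (SProc (sigma_n (delta Sg (err Sg)) sender)).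
Proof. apply tRec. apply tSnd. reflexivity. Qed.

Lemma ready_with_tester_wbarb G Y : ready G Y -> with_tester G Y -> wbarb (G, Y) d.
Proof.
  intros HR [W [X [-> [[-> _] | [[[|j] [-> Hj]] | ->]]]]].
  - destruct HR as [_ HR]. inversion HR.
  - eapply send_wbarb, trans_sender_send.
  - destruct (Nat.eq_dec (fst (G d)) 0) as [Hd|Hd].
    + (* the tester is [PSigma sender]: one time unit passes, then it broadcasts *)
      assert (j = 0) as -> by lia.
      destruct (ready_sig _ _ HR) as [Y' Ht].
      inversion Ht; subst.
      match goal with Hx : trans _ (SProc (PSigma _)) _ _ |- _ =>
        apply trans_sigma in Hx; destruct Hx as [[_ ->]|[[? [? ?]] _]]; [|discriminate] end.
      eapply wbarb_red; [apply (red_trans (l := LSig Sg)); [discriminate | eassumption]|].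
      eapply send_wbarb, trans_sender_send.
    + exists (G, SPar W (SProc (sigma_n (S j) sender))). split; [apply rt_refl | exact Hd].
  - eapply send_wbarb. apply tSnd. reflexivity.
Qed.

Lemma eventually_ready_with_tester_wbarb G Y :
  eventually_ready G Y -> with_tester G Y -> wbarb (G, Y) d.
Proof.
  induction 1 as [G Y HR|G Y l Y' Hl Ht _ IH]; intros HI.
  - apply ready_with_tester_wbarb; assumption.
  - eapply wbarb_red; [apply red_ev_step; eassumption|].
    apply IH. eapply with_tester_trans; [eassumption | eassumption|].
    intros [? [? ->]]; destruct Hl as [|[? [? ?]]]; discriminate.
Qed.

Lemma tester_reducts_wbarb G (W : sys Sg) C :
  exposed G c -> wf_s G W -> red_star (G, SPar W (SProc tester)) C ->
  closed_sys (snd C) -> wbarb C d.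
Proof.
  intros Hc Hw Hr HC.
  assert (HI : with_tester (fst C) (snd C) /\ wf_s (fst C) (snd C)).
  { apply (red_star_invariant (fun C => with_tester (fst C) (snd C) /\ wf_s (fst C) (snd C)))
      with (C := (G, SPar W (SProc tester))); [|exact Hr|].
    - intros [G0 Y0] [G' Y'] [l [Hl [Ht ->]]] [HI0 Hw0]; simpl in *.
      split; [eapply with_tester_trans; eauto | exact (trans_wf Ht Hw0)].
      intros [? [? ->]]; eapply Hl; eauto.
    - split; [do 2 eexists; split; [reflexivity | left; auto] | simpl; auto]. }
  destruct C as [G' Y], HI as [HI Hw']; simpl in *.
  apply eventually_ready_with_tester_wbarb; [apply time_progress; split|]; assumption.
Qed.

Lemma tester_closed : closed_sys (SProc tester).
Proof. unfold closed_sys; simpl; tauto. Qed.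

Lemma tester_red_idle G (W : sys Sg) :
  idle G c -> red (G, SPar W (SProc tester)) (G, SPar W (SProc (PSigma (PNil Sg)))).
Proof.
  intro Hi. apply (red_trans (l := LTau Sg)); [discriminate|].
  apply tTauParR, tElse. simpl; unfold exposed; auto.
Qed.

End Tester.

Section FreshChannel.
Variable d : chan.

Definition fresh_within (m : nat) (C : config Sg) : Prop :=
  ~ free_ch d (snd C) /\ fst (fst C d) <= m.

Lemma red_fresh_within m C C' : red C C' -> fresh_within m C -> fresh_within m C'.
Proof.
  destruct C as [G W], C' as [G' W'].
  intros [l [Hl [Ht HG]]] [Hf Hm]; simpl in *; subst.
  destruct (trans_fresh d Ht Hf) as [Hf' Hs]. split; [assumption|].
  destruct l as [e v|e v| |]; simpl; try lia.
  - unfold tx_upd, upd. destruct (Nat.eqb_spec d e) as [->|]; [|assumption].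
    exfalso; eapply Hs; reflexivity.
  - exfalso; eapply Hl; reflexivity.
Qed.

Lemma fresh_idle_no_wbarb C : fresh_within 0 C -> ~ wbarb C d.
Proof.
  intros HF [C' [Hr Hb]].
  destruct (red_star_invariant (fresh_within 0) (@red_fresh_within 0) Hr HF) as [_ Hi].
  unfold barb, exposed in Hb. lia.
Qed.

(* Time passes at least once on the way to readiness. *)
Lemma eventually_ready_fresh_within G (W : sys Sg) m :
  eventually_ready G W -> fresh_within m (G, W) ->
  exists C', red_star (G, W) C' /\ fresh_within (m - 1) C'.
Proof.
  induction 1 as [G W HR|G W l W' Hl Ht _ IH]; intro HF.
  - destruct (ready_sig _ _ HR) as [W' Ht].
    exists (act_env (LSig Sg) G, W'). split.
    + apply rt_step, red_trans; [discriminate | exact Ht].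
    + destruct HF as [Hf Hm].
      split; [apply (trans_fresh d Ht Hf) | simpl in *; lia].
  - pose proof (red_ev_step Hl Ht) as Hr.
    destruct (IH (red_fresh_within Hr HF)) as [C' [Hr' HC']].
    exists C'; split; [eapply rt_trans; [apply rt_step, Hr | exact Hr'] | exact HC'].
Qed.

(* Repeatedly letting time pass on the left makes [d] idle; reduction
   closure lets the right-hand side follow. *)
Lemma related_fresh_idle (R : config Sg -> config Sg -> Prop) :
  (forall D1 D2, R D1 D2 -> is_config D1 /\ is_config D2) -> reduction_closed R ->
  forall k C1 C2, R C1 C2 -> wf_s (fst C1) (snd C1) -> fresh_within k C1 ->
  exists C1' C2', R C1' C2' /\ red_star C2 C2' /\ fresh_within 0 C1'.
Proof.
  intros Hconf Hrc k; induction k as [|k IH]; intros C1 C2 HR Hw HF.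
  - exists C1, C2; split; [|split; [apply rt_refl|]]; assumption.
  - destruct C1 as [G W].
    assert (Hev : eventually_ready G W)
      by (apply time_progress; split; [apply (Hconf _ _ HR) | assumption]).
    destruct (eventually_ready_fresh_within Hev HF) as [C1' [Hr1 HF1]].
    destruct (reduction_closed_star Hrc _ Hr1 HR) as [C2' [Hr2 HR']].
    replace (S k - 1) with k in HF1 by lia.
    destruct (IH _ _ HR' (red_star_invariant _ (@red_wf) Hr1 Hw) HF1)
      as [C1'' [C2'' [HR'' [Hr2' HF'']]]].
    exists C1'', C2''; split; [|split; [eapply rt_trans|]]; eassumption.
Qed.

End FreshChannel.

Lemma ch_in_p_bounded (P : proc Sg) : exists N, forall e, ch_in_p e P -> e < N.
Proof.
  induction P as [c e P [N HN]|c x P [N1 H1] Q [N2 H2]|P IH|P IH|P [N1 H1] Q [N2 H2]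
                 |[e1 e2|c] P [N1 H1] Q [N2 H2]| | |X P IH]; simpl; auto.
  - exists (N + c + 1). intros e' [->|H]; [|apply HN in H]; lia.
  - exists (N1 + N2 + c + 1). intros e [->|[H|H]]; [|apply H1 in H|apply H2 in H]; lia.
  - exists (N1 + N2). intros e [H|H]; [apply H1 in H|apply H2 in H]; lia.
  - exists (N1 + N2). intros e [[]|[H|H]]; [apply H1 in H|apply H2 in H]; lia.
  - exists (N1 + N2 + c + 1). intros e [->|[H|H]]; [|apply H1 in H|apply H2 in H]; lia.
  - exists 0; tauto.
  - exists 0; tauto.
Qed.

Lemma free_ch_bounded (W : sys Sg) : exists N, forall e, free_ch e W -> e < N.
Proof.
  induction W as [P|c x P|W1 [N1 H1] W2 [N2 H2]|c n v W [N HN]]; simpl.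
  - apply ch_in_p_bounded.
  - destruct (ch_in_p_bounded P) as [N HN].
    exists (N + c + 1). intros e [->|H]; [|apply HN in H]; lia.
  - exists (N1 + N2). intros e [H|H]; [apply H1 in H|apply H2 in H]; lia.
  - exists N. intros e [_ H]; auto.
Qed.

Lemma exists_fresh_ch (W1 W2 : sys Sg) : exists d, ~ free_ch d W1 /\ ~ free_ch d W2.
Proof.
  destruct (free_ch_bounded W1) as [N1 H1], (free_ch_bounded W2) as [N2 H2].
  exists (N1 + N2); split; intro H; [apply H1 in H | apply H2 in H]; lia.
Qed.

End Idle.

Theorem mainTheorem13 (Sg : signature) (Hdelta : forall v : val Sg, 1 <= delta Sg v)
  (G1 G2 : env Sg) (W1 W2 : sys Sg) :
  well_formed (G1, W1) -> well_formed (G2, W2) ->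
  rbc (G1, W1) (G2, W2) ->
  forall c : chan, idle G1 c -> idle G2 c.
Proof.
  intros [_ Hw1] [_ Hw2] [R [Hconf [Hsym [Hbp [Hrc [Hctx HR]]]]]] c Hi1.
  destruct (classic (idle G2 c)) as [|Hc2]; [assumption | exfalso].
  destruct (exists_fresh_ch W1 W2) as [d [Hd1 Hd2]].
  pose proof (Hctx _ _ _ _ _ HR (tester_closed Sg c d)) as HRt.
  destruct (Hrc _ _ _ HRt (tester_red_idle d W1 Hi1)) as [C2 [Hr2 HR2]].
  destruct (related_fresh_idle Hdelta Hconf Hrc (d := d) (k := fst (G1 d)) _ HR2)
    as [C1' [C2' [HR' [Hr2' HF']]]].
  - simpl; auto.
  - split; simpl; [tauto | lia].
  - apply (fresh_idle_no_wbarb HF'), (Hbp _ _ d (Hsym _ _ HR')).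
    apply (tester_reducts_wbarb Hdelta Hc2 Hw2 (rt_trans _ _ _ _ _ Hr2 Hr2')).
    apply (Hconf _ _ HR').
Qed.
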